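(* Let $A$ be an $m\times n$ polyomino. Then the diagram of $A$ is (the set of positions of) a Ferrers array $F$, and the ranked essential set of $A$ consists of the lower right corners of $F$, each with rank $0$. Furthermore, for nonnegative integral vectors $R,S$, a polyomino $A\in\mathcal{C}_{m,n}(R,S)$ is uniquely determined by its ranked essential set; that is, two polyominoes in $\mathcal{C}_{m,n}(R,S)$ with the same ranked essential set are equal.
   Context: A $(0,1)$-matrix is convex if in every row and every column the 1's occur consecutively. It is connected if it has no zero row and no zero column and every two 1's are joined by a path of 1's in which consecutive 1's are horizontally or vertically adjacent. A polyomino is a connected convex $(0,1)$-matrix. $\mathcal{C}_{m,n}(R,S)$ is the set of convex $m\times n$ $(0,1)$-matrices with row sum vector $R$ and column sum vector $S$. A Ferrers array $F(U)$ for a nonincreasing nonnegative integer vector $U=(u_1,\dots,u_m)$ is the set of positions $\{(i,j): 1\le j\le u_i\}$ (left-justified rows of lengths $u_i$); its lower right corners are the positions $(i,u_i)$ with $u_i>u_{i+1}$ (where $u_{m+1}=0$). The diagram of an $m\times n$ $(0,1)$-matrix $A$: for each 1 of $A$ at $(i,j)$ shade all positions $(i,j')$, $j'\ge j$, and $(i',j)$, $i'\ge i$; the diagram is the set of unshaded positions. The essential set is the set of positions $(i,j)$ of the diagram such that neither $(i+1,j)$ nor $(i,j+1)$ lies in the diagram; the ranked essential set consists of the triples $(i,j;r)$ with $(i,j)$ in the essential set and $r$ the number of 1's of $A$ in rows $1,\dots,i$ and columns $1,\dots,j$. *)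

(* Matrices are 'M[bool]_(m, n); rows/columns are 0-indexed. *)
From mathcomp Require Import all_boot all_order all_algebra.
Set Implicit Arguments. Unset Strict Implicit. Unset Printing Implicit Defensive.

Section Polyomino.
Variables (m n : nat).
Implicit Types (A : 'M[bool]_(m, n)).

Definition convex A : Prop :=
  (forall (i : 'I_m) (j1 j j2 : 'I_n),
      j1 <= j -> j <= j2 -> A i j1 -> A i j2 -> A i j) /\
  (forall (j : 'I_n) (i1 i i2 : 'I_m),
      i1 <= i -> i <= i2 -> A i1 j -> A i2 j -> A i j).

Definition adj1 A : rel ('I_m * 'I_n) := fun p q =>
  [&& A p.1 p.2, A q.1 q.2 &
    ((p.1 == q.1) && ((p.2.+1 == q.2 :> nat) || (q.2.+1 == p.2 :> nat)))
    || ((p.2 == q.2) && ((p.1.+1 == q.1 :> nat) || (q.1.+1 == p.1 :> nat)))].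

Definition connected A : Prop :=
  (forall i : 'I_m, exists j : 'I_n, A i j) /\
  (forall j : 'I_n, exists i : 'I_m, A i j) /\
  (forall p q : 'I_m * 'I_n, A p.1 p.2 -> A q.1 q.2 -> connect (adj1 A) p q).

Definition polyomino A : Prop := convex A /\ connected A.

Definition row_sum A (i : 'I_m) : nat := \sum_(j < n) (A i j : nat).
Definition col_sum A (j : 'I_n) : nat := \sum_(i < m) (A i j : nat).

Definition in_C A (R : 'I_m -> nat) (S : 'I_n -> nat) : Prop :=
  convex A /\ (forall i, row_sum A i = R i) /\ (forall j, col_sum A j = S j).

Definition in_diagram A (i j : nat) : bool :=
  match insub i : option 'I_m, insub j : option 'I_n with
  | Some i', Some j' =>
      ~~ [exists k : 'I_n, (k <= j') && A i' k] &&
      ~~ [exists k : 'I_m, (k <= i') && A k j']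
  | _, _ => false
  end.

Definition diagram A : {set 'I_m * 'I_n} :=
  [set p : 'I_m * 'I_n | in_diagram A p.1 p.2].

Definition essential A : {set 'I_m * 'I_n} :=
  [set p : 'I_m * 'I_n | [&& in_diagram A p.1 p.2, ~~ in_diagram A p.1.+1 p.2
            & ~~ in_diagram A p.1 p.2.+1]].

Definition rank_at A (i : 'I_m) (j : 'I_n) : nat :=
  \sum_(k < m | k <= i) \sum_(l < n | l <= j) (A k l : nat).

Definition ranked_essential A : pred ('I_m * 'I_n * nat) := fun t =>
  (t.1 \in essential A) && (t.2 == rank_at A t.1.1 t.1.2).

End Polyomino.

(* Ferrers array F(U) for U = (u_1,...,u_m) (a seq of length m, nonincreasing),
   0-indexed: position (i,j) is in F(U) iff j < u_i. *)
Definition ferrers_vec (m n : nat) (U : seq nat) : Prop :=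
  size U = m /\ sorted geq U /\ all (fun u => u <= n) U.

Definition in_ferrers (U : seq nat) (i j : nat) : bool := j < nth 0 U i.

(* lower right corners (i, u_i) with u_i > u_{i+1} (u_{m+1} = 0);
   0-indexed: column u_i - 1, i.e. j.+1 = u_i *)
Definition ferrers_corner (U : seq nat) (i j : nat) : bool :=
  (j.+1 == nth 0 U i) && (nth 0 U i.+1 < nth 0 U i).

From Pilot Require Import Defs.
From mathcomp Require Import all_boot all_order all_algebra.
From mathcomp Require Import zify.
Set Implicit Arguments. Unset Strict Implicit. Unset Printing Implicit Defensive.

(* In a connected matrix a position (i, j) is unshaded exactly when the
   rectangle of rows <= i and columns <= j contains no 1.  So the diagram is a
   down-set, i.e. a Ferrers array; its essential positions are its lower right
   corners, and their rank counts the 1's of an empty rectangle.  The corners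
   determine the Ferrers array, so two polyominoes with the same ranked
   essential set have the same diagram.  If they also have the same line sums,
   look at the first position (i, j) in row-major order where A has a 1 and B
   a 0: convexity of B and the equal line sums force A to have no 1 left of
   (i, j) in row i nor above it in column j, hence none in the whole rectangle
   above-left of it.  Then (i, j) lies in the diagram of B but not in that
   of A. *)

Lemma ltn_find_iota (P : pred nat) (n : nat) :
  (forall j l, l <= j -> P j -> P l) -> (forall j, P j -> j < n) ->
  forall j, P j = (j < find (predC P) (iota 0 n)).
Proof.
move=> Pdown Pn j; apply/idP/idP => [Pj|].
- rewrite ltnNge; apply/negP => le_find_j.
  have has_notP : has (predC P) (iota 0 n).
    by rewrite has_find size_iota (leq_ltn_trans le_find_j (Pn j Pj)).
  have := nth_find 0 has_notP.
  rewrite nth_iota; last by move: has_notP; rewrite has_find size_iota.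
  by rewrite add0n /= (Pdown _ _ le_find_j Pj).
- move=> lt_j_find; have := before_find 0 lt_j_find.
  have := find_size (predC P) (iota 0 n); rewrite size_iota => find_n.
  by rewrite nth_iota ?(leq_trans lt_j_find) // add0n /= => /negbFE.
Qed.

Lemma path_cross (T : Type) (e : rel T) (P : pred T) x s :
  path e x s -> P x -> ~~ P (last x s) -> exists x1 x2, [/\ e x1 x2, P x1 & ~~ P x2].
Proof.
elim: s x => [|y s IH] x /=; first by move=> _ ->.
case/andP=> exy pys Px; case Py: (P y); first exact: IH.
by exists x, y; rewrite Py.
Qed.

Lemma interval_sum_lt k (f g : 'I_k -> bool) (j l : 'I_k) :
  (forall x1 x x2 : 'I_k, x1 <= x -> x <= x2 -> g x1 -> g x2 -> g x) ->
  (forall x : 'I_k, x < j -> f x = g x) -> l < j -> g l -> ~~ g j -> f j ->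
  \sum_(x < k) (g x : nat) < \sum_(x < k) (f x : nat).
Proof.
move=> g_interval fg lj gl gj fj.
rewrite [X in X < _](bigID (fun x : 'I_k => x < j)).
rewrite [X in _ < X](bigID (fun x : 'I_k => x < j)) /=.
rewrite [X in _ + X < _]big1 => [|x]; last first.
  rewrite -leqNgt => jx; case gx: (g x) => //; case/negP: gj.
  exact: g_interval (ltnW lj) jx gl gx.
rewrite [X in _ < X + _](eq_bigr (fun x : 'I_k => (g x : nat))) => [|x /fg -> //].
by rewrite addn0 -[X in X < _]addn0 ltn_add2l (bigD1 j) ?ltnn //= fj add1n.
Qed.

(* Peeling rows from the top: the corner condition in the first row
   forces equal first parts once the remaining rows agree. *)
Lemma ferrers_vec_corner_inj m n U V : ferrers_vec m n U -> ferrers_vec m n V ->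
  (forall i j, i < m -> j < n -> ferrers_corner U i j = ferrers_corner V i j) -> U = V.
Proof.
move=> [<- [sU bU]] [sizeV [sV bV]].
elim: U V sizeV sU sV bU bV => [|u U IH] [|v V] //= [sizeV] sU sV /andP[un bU] /andP[vn bV] E.
have VU : V = U.
  apply/esym/IH => [||||| i j iU jn] //; [exact: path_sorted sU|exact: path_sorted sV|].
  exact: E i.+1 j iU jn.
subst V.
have head_le t : path geq t U -> nth 0 U 0 <= t by case: (U) => [|w U'] //= /andP[].
have wu := head_le u sU; have wv := head_le v sV.
case: (ltnP (nth 0 U 0) u) => [lt_wu|le_uw].
  have := E 0 u.-1 isT ltac:(lia); rewrite /ferrers_corner /= prednK ?eqxx ?lt_wu; last by lia.
  by case/esym/andP=> /eqP ->.
case: (ltnP (nth 0 U 0) v) => [lt_wv|le_vw]; last by congr (_ :: _); lia.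
have := E 0 v.-1 isT ltac:(lia); rewrite /ferrers_corner /= prednK ?eqxx ?lt_wv; last by lia.
by case/andP=> /eqP ->.
Qed.

Section Polyomino.
Variables m n : nat.
Implicit Types A B : 'M[bool]_(m, n).

Lemma matrix_lex_ind (P : 'I_m -> 'I_n -> Prop) :
  (forall (i : 'I_m) (j : 'I_n),
     (forall (k : 'I_m) (l : 'I_n), k < i -> P k l) ->
     (forall l : 'I_n, l < j -> P i l) -> P i j) ->
  forall i j, P i j.
Proof.
move=> step.
suff rows : forall r (k : 'I_m) l, k < r -> P k l by move=> i j; apply: (rows m).
elim=> [//|r IH] k l; rewrite ltnS leq_eqVlt => /orP[/eqP kr|]; last exact: IH.
suff cols : forall c (l : 'I_n), l < c -> P k l by apply: (cols n).
elim=> [//|c IHc] l'; rewrite ltnS leq_eqVlt => /orP[/eqP lc|]; last exact: IHc.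
by apply: step => [k' l'' | l'']; [rewrite kr; exact: IH | rewrite lc; exact: IHc].
Qed.

Lemma adj1P A p q : Defs.adj1 A p q ->
  [/\ A p.1 p.2, A q.1 q.2 &
      (p.1 = q.1 :> nat /\ (p.2.+1 = q.2 \/ q.2.+1 = p.2)) \/
      (p.2 = q.2 :> nat /\ (p.1.+1 = q.1 \/ q.1.+1 = p.1))].
Proof.
case/and3P=> Ap Aq adj; split=> //.
by case/orP: adj => /andP[/eqP e /orP[]/eqP e']; [left|left|right|right]; rewrite e; auto.
Qed.

Lemma connected_rows_overlap A (r1 r2 : 'I_m) :
  connected A -> r2 = r1.+1 :> nat -> exists l : 'I_n, A r1 l && A r2 l.
Proof.
case=> [has_one [_ linked]] r12.
have [c1 A1] := has_one r1; have [c2 A2] := has_one r2.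
case/connectP: (linked (r1, c1) (r2, c2) A1 A2) => s pth lst.
have [|[x1 y1] [[x2 y2] [/adj1P[/= Ax1 Ax2 adj] le1 lt2]]] :=
  path_cross (P := fun p : 'I_m * 'I_n => p.1 <= r1) pth (leqnn r1).
  by rewrite -lst /= -ltnNge r12.
rewrite -ltnNge in lt2.
have ey : y2 = y1 by apply/val_inj => /=; lia.
have ex1 : x1 = r1 by apply/val_inj => /=; lia.
have ex2 : x2 = r2 by apply/val_inj => /=; lia.
by exists y1; rewrite -ex1 -ex2 Ax1 -ey Ax2.
Qed.

(* A path of 1's from inside the rectangle to a 1 of row i right of column j
   must leave the rectangle through row i or column j. *)
Lemma in_diagramE A i j : connected A ->
  in_diagram A i j = [&& i < m, j < n &
    [forall k : 'I_m, forall l : 'I_n, (k <= i) && (l <= j) ==> ~~ A k l]].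
Proof.
move=> cA; rewrite /in_diagram.
case: insubP => [i' _ <-|/negbTE-> //].
case: insubP => [j' _ <-|/negbTE->]; last by rewrite andbF.
rewrite !ltn_ord /=.
apply/idP/idP => [/andP[/existsPn row_free /existsPn col_free]|/forallP rect].
- apply/forallP => k; apply/forallP => l; apply/implyP => /andP[ki lj]; apply/negP => Akl.
  case: cA => [has_one [_ linked]]; have [c Ac] := has_one i'.
  case/connectP: (linked (k, l) (i', c) Akl Ac) => s pth lst.
  have [|[x1 y1] [[x2 y2] [/adj1P[/= Ax1 _ adj] /andP[xi yj] out]]] :=
    path_cross (P := fun p : 'I_m * 'I_n => (p.1 <= i') && (p.2 <= j')) pth
               (introT andP (conj ki lj)).
    by rewrite -lst /=; apply: contraL Ac => /andP[_ cj]; have := row_free c; rewrite cj.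
  rewrite negb_and -!ltnNge /= in out.
  have [/val_inj exi|/val_inj eyj] : x1 = i' :> nat \/ y1 = j' :> nat by case/orP: out; lia.
  + by have := row_free y1; rewrite yj -exi Ax1.
  + by have := col_free x1; rewrite xi -eyj Ax1.
- by apply/andP; split; apply/existsPn => k; apply/negP => /andP[le Ak];
    [have := forallP (rect i') k | have := forallP (rect k) j']; rewrite le leqnn Ak.
Qed.

Lemma in_diagram_down A i j i' j' : connected A ->
  i' <= i -> j' <= j -> in_diagram A i j -> in_diagram A i' j'.
Proof.
move=> cA ii jj; rewrite !in_diagramE // => /and3P[im jn /forallP rect].
rewrite (leq_ltn_trans ii im) (leq_ltn_trans jj jn); apply/forallP => k.
apply/forallP => l; apply/implyP => /andP[ki lj].
by have := forallP (rect k) l; rewrite (leq_trans ki ii) (leq_trans lj jj).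
Qed.

Lemma rank_at_diagram A (i : 'I_m) (j : 'I_n) : connected A ->
  in_diagram A i j -> rank_at A i j = 0.
Proof.
move=> cA; rewrite in_diagramE // => /and3P[_ _ /forallP rect].
rewrite /rank_at big1 // => k ki; rewrite big1 // => l lj.
by have := forallP (rect k) l; rewrite ki lj => /negbTE ->.
Qed.

Definition row_len A (i : nat) : nat := find (predC (in_diagram A i)) (iota 0 n).

Lemma in_diagram_row_len A i j : connected A -> in_diagram A i j = (j < row_len A i).
Proof.
move=> cA; apply: ltn_find_iota => [j' l lj|j']; first exact: in_diagram_down.
by rewrite in_diagramE // => /and3P[].
Qed.

Lemma row_len_le A i : row_len A i <= n.
Proof. by have := find_size (predC (in_diagram A i)) (iota 0 n); rewrite size_iota. Qed.

Lemma row_len_nonincr A i : connected A -> row_len A i.+1 <= row_len A i.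
Proof.
move=> cA; rewrite leqNgt -in_diagram_row_len //; apply/negP => /(in_diagram_down cA).
by move=> /(_ i (row_len A i) (leqnSn i) (leqnn _)); rewrite in_diagram_row_len // ltnn.
Qed.

Lemma nth_row_len A i : connected A -> nth 0 (mkseq (row_len A) m) i = row_len A i.
Proof.
move=> cA; case: (ltnP i m) => im; first by rewrite nth_mkseq.
rewrite nth_default ?size_mkseq //; apply/esym/eqP; rewrite -leqn0 leqNgt.
by rewrite -in_diagram_row_len // in_diagramE // ltnNge im.
Qed.

Lemma ranked_essential_row_len A (i : 'I_m) (j : 'I_n) r : connected A ->
  ranked_essential A (i, j, r) =
  (r == 0) && ferrers_corner (mkseq (row_len A) m) i j.
Proof.
move=> cA; rewrite /ranked_essential /essential inE /= /ferrers_corner !nth_row_len //.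
have mono := @row_len_nonincr A i cA.
rewrite !in_diagram_row_len // -!leqNgt.
have -> : [&& j < row_len A i, row_len A i.+1 <= j & row_len A i <= j.+1] =
          (j.+1 == row_len A i) && (row_len A i.+1 < row_len A i).
  by apply/and3P/andP => [[*]|[/eqP *]]; [split; first apply/eqP|split]; lia.
case corner: ((j.+1 == row_len A i) && (row_len A i.+1 < row_len A i)); last by rewrite andbF.
case/andP: corner => /eqP jL _.
by rewrite rank_at_diagram ?in_diagram_row_len -?jL // andbT.
Qed.

Lemma connected_diagram_ferrers A : connected A ->
  exists U : seq nat,
    ferrers_vec m n U /\
    (forall p : 'I_m * 'I_n, (p \in diagram A) = in_ferrers U p.1 p.2) /\
    (forall (i : 'I_m) (j : 'I_n) (r : nat),
       ranked_essential A (i, j, r) = (r == 0) && ferrers_corner U i j).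
Proof.
move=> cA; exists (mkseq (row_len A) m); split; [split; [|split]|split].
- by rewrite size_mkseq.
- apply/(sortedP 0) => i; rewrite size_mkseq => im.
  by rewrite !nth_mkseq ?(ltnW im) //; apply: row_len_nonincr.
- by apply/allP => u /mapP[i _ ->]; exact: row_len_le.
- by move=> p; rewrite inE /in_ferrers nth_row_len // in_diagram_row_len.
- by move=> i j r; rewrite ranked_essential_row_len.
Qed.

Lemma ranked_essential_diagram A B : connected A -> connected B ->
  ranked_essential A =i ranked_essential B -> diagram A = diagram B.
Proof.
move=> cA cB E.
have [U [fU [dU eU]]] := connected_diagram_ferrers cA.
have [V [fV [dV eV]]] := connected_diagram_ferrers cB.
suff UV : U = V by apply/setP => p; rewrite dU dV UV.
apply: ferrers_vec_corner_inj fU fV _ => i j im jn.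
by have := E (Ordinal im, Ordinal jn, 0); rewrite /in_mem /= eU eV.
Qed.

(* Consecutive rows overlap, so a 1 above-left of (i, j) propagates down to
   row i while staying left of column j; row convexity prevents it from
   jumping over column j. *)
Lemma polyomino_zero_above_left A (i : 'I_m) (j : 'I_n) : polyomino A ->
  (forall l : 'I_n, l < j -> ~~ A i l) -> (forall k : 'I_m, k < i -> ~~ A k j) ->
  forall (k : 'I_m) (l : 'I_n), k < i -> l < j -> ~~ A k l.
Proof.
move=> [[row_cvx _] cA] row_free col_free k l ki lj; apply/negP => Akl.
suff descend : forall d, k + d <= i ->
    exists (r : 'I_m) (y : 'I_n), [/\ r = k + d :> nat, y < j & A r y].
  have [r [y [eri yj Ary]]] := descend (i - k) ltac:(lia).
  have /val_inj eri' : r = i :> nat by lia.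
  by have := row_free y yj; rewrite -eri' Ary.
elim=> [|d IH] le_i; first by exists k, l; rewrite addn0.
have [r [y [er yj Ary]]] := IH ltac:(lia).
have r1m : r.+1 < m by have := ltn_ord i; lia.
have [c /andP[Arc Ar1c]] := connected_rows_overlap (r2 := Ordinal r1m) cA erefl.
case: (ltnP c j) => cj; first by exists (Ordinal r1m), c; split => //=; lia.
have := col_free r ltac:(lia); rewrite (row_cvx r y j c) //; exact: ltnW.
Qed.

Lemma polyomino_one_of_lex_agree A B (i : 'I_m) (j : 'I_n) :
  polyomino A -> polyomino B ->
  (forall k, row_sum A k = row_sum B k) -> (forall l, col_sum A l = col_sum B l) ->
  diagram A = diagram B ->
  (forall (k : 'I_m) (l : 'I_n), k < i -> A k l = B k l) ->
  (forall l : 'I_n, l < j -> A i l = B i l) ->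
  A i j -> B i j.
Proof.
move=> pA pB rows cols D above left Aij; apply/idPn => nBij.
have [[row_cvxB col_cvxB] cB] := pB.
have row_free : forall l : 'I_n, l < j -> ~~ A i l.
  move=> l lj; apply/negP => Ail.
  have Bil : B i l by rewrite -left.
  have := interval_sum_lt (row_cvxB i) left lj Bil nBij Aij.
  by rewrite -/(row_sum B i) -/(row_sum A i) rows ltnn.
have col_free : forall k : 'I_m, k < i -> ~~ A k j.
  move=> k ki; apply/negP => Akj.
  have Bkj : B k j by rewrite -above.
  have := interval_sum_lt (col_cvxB j) (fun x xi => above x j xi) ki Bkj nBij Aij.
  by rewrite -/(col_sum B j) -/(col_sum A j) cols ltnn.
have zero := polyomino_zero_above_left pA row_free col_free.
have inB : (i, j) \in diagram B.
  rewrite inE in_diagramE // !ltn_ord; apply/forallP => k; apply/forallP => l.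
  apply/implyP => /andP[]; rewrite leq_eqVlt => /orP[/eqP/val_inj-> | ki];
    rewrite leq_eqVlt => /orP[/eqP/val_inj-> | lj].
  - exact: nBij.
  - by rewrite -left // row_free.
  - by rewrite -above // col_free.
  - by rewrite -above // zero.
have notA : (i, j) \notin diagram A.
  rewrite inE in_diagramE ?ltn_ord; last exact: pA.2.
  by apply/negP => /forallP/(_ i)/forallP/(_ j); rewrite !leqnn Aij.
by rewrite D inB in notA.
Qed.

Lemma polyomino_eq A B : polyomino A -> polyomino B ->
  (forall i, row_sum A i = row_sum B i) -> (forall j, col_sum A j = col_sum B j) ->
  diagram A = diagram B -> A = B.
Proof.
move=> pA pB rows cols D; apply/matrixP; apply: matrix_lex_ind => i j above left.
apply/idP/idP; first exact: polyomino_one_of_lex_agree.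
by apply: polyomino_one_of_lex_agree => //; [move=> k l /above -> | move=> l /left ->].
Qed.

End Polyomino.

Theorem mainTheorem2 :
  (forall (m n : nat) (A : 'M[bool]_(m, n)), polyomino A ->
     exists U : seq nat,
       ferrers_vec m n U /\
       (forall p : 'I_m * 'I_n, (p \in diagram A) = in_ferrers U p.1 p.2) /\
       (forall (i : 'I_m) (j : 'I_n) (r : nat),
          ranked_essential A (i, j, r) = (r == 0) && ferrers_corner U i j)) /\
  (forall (m n : nat) (R : 'I_m -> nat) (S : 'I_n -> nat)
          (A B : 'M[bool]_(m, n)),
     polyomino A -> polyomino B -> in_C A R S -> in_C B R S ->
     ranked_essential A =i ranked_essential B -> A = B).
Proof.
split=> [m n A [_ cA]|m n R S A B pA pB [_ [RA SA]] [_ [RB SB]] E].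
  exact: connected_diagram_ferrers.
apply: polyomino_eq pA pB _ _ (ranked_essential_diagram pA.2 pB.2 E) => [i|j].
  by rewrite RA RB.
by rewrite SA SB.
Qed.
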